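(* Let $N\ge1$ be an integer, $d>0$, $T\ge (N+1)d$, and $0\le s_1\le\dots\le s_N$. Let $x^e$ be the optimal solution of the problem $(P^e)$: $$\min_{x\in\mathbb{R}^{N+1}}\ \sum_{i=1}^{N+1}x_i^2$$ subject to $\sum_{i=1}^k x_i\ge s_k+kd$ for $1\le k\le N$, and $\sum_{i=1}^{N+1}x_i=T+Nd$. Let $\bar x$ be the output of the Inter-Update Balancing Algorithm defined in the context. Then $x_i^e=\bar x_i$ for all $1\le i\le N$.
   Context: Inter-Update Balancing Algorithm. Set $s_0:=0$, $s_{N+1}:=T-d$, and $i_0:=0$. For $k=0,1,2,\dots$, while $i_k<N+1$, do the following. 1. Compute $M_k=\max_{i_k<j\le N+1}\frac{s_j-s_{i_k}}{j-i_k}$. 2. Let $i_{k+1}$ be the largest index $j\in\{i_k+1,\dots,N+1\}$ attaining this maximum. 3. Set $\bar x_i=M_k+d$ for all $i_k<i\le i_{k+1}$. The algorithm stops once $i_{k+1}=N+1$. Problem $(P^e)$ has a strictly convex objective, so its optimal solution is unique. *)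

From HB Require Import structures.
From mathcomp Require Import all_boot all_order all_algebra.
Set Implicit Arguments. Unset Strict Implicit. Unset Printing Implicit Defensive.
Import Order.TTheory GRing.Theory Num.Theory.
Local Open Scope ring_scope.

Section IUB.
Variables (R : realFieldType) (N : nat) (T d : R) (s : nat -> R).

Definition sext (j : nat) : R :=
  if j == 0%N then 0 else if j == N.+1 then T - d else s j.

Definition slope (i j : nat) : R := (sext j - sext i) / (j - i)%:R.

(* For i < N+1: the pair (M, i') where M = max_{i<j<=N+1} slope i j and
   i' is the LARGEST index j in (i, N+1] attaining this maximum
   (ties are resolved in favour of later indices by the >= test). *)
Definition best_step (i : nat) : R * nat :=
  foldl (fun acc j => if acc.1 <= slope i j then (slope i j, j) else acc)
        (slope i i.+1, i.+1) (iota i.+2 (N - i)).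

Fixpoint iub_run (fuel i : nat) : nat -> R :=
  match fuel with
  | 0%N => fun _ => 0
  | fuel'.+1 =>
      if (i < N.+1)%N then
        let: (M, i') := best_step i in
        let rest := iub_run fuel' i' in
        fun m => if (i < m <= i')%N then M + d else rest m
      else fun _ => 0
  end.

(* Output xbar of the Inter-Update Balancing Algorithm (indices 1..N+1);
   N+1 iterations suffice since the breakpoint strictly increases. *)
Definition iub_xbar : nat -> R := iub_run N.+1 0.

Definition Pe_feasible (x : nat -> R) : Prop :=
  (forall k, (1 <= k <= N)%N -> s k + k%:R * d <= \sum_(1 <= i < k.+1) x i) /\
  \sum_(1 <= i < N.+2) x i = T + N%:R * d.

Definition Pe_obj (x : nat -> R) : R := \sum_(1 <= i < N.+2) x i ^+ 2.

Definition Pe_optimal (x : nat -> R) : Prop :=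
  Pe_feasible x /\ forall y, Pe_feasible y -> Pe_obj x <= Pe_obj y.

End IUB.

(* Write B_k = s_k + k d, so that (P^e) asks the prefix sums X_k of x to satisfy
   X_k >= B_k for k <= N and X_(N+1) = B_(N+1). The algorithm cuts 1..N+1 into
   blocks on which xbar is constant, equal to the largest slope of B from the
   left end of the block, attained at its right end. Hence the prefix sums of
   xbar stay above B and meet it at every block end, and the levels decrease
   from block to block. So xbar is feasible and satisfies the first-order
   condition <xbar, y - xbar> >= 0 for every feasible y (by induction over the
   blocks), and |y|^2 = |xbar|^2 + 2 <xbar, y - xbar> + |y - xbar|^2 shows that
   every minimiser equals xbar. *)

From Pilot Require Import Defs.
From mathcomp Require Import all_boot all_order all_algebra.
From mathcomp Require Import ring lra zify.
Set Implicit Arguments. Unset Strict Implicit. Unset Printing Implicit Defensive.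
Import Order.TTheory GRing.Theory Num.Theory.
Local Open Scope ring_scope.

Lemma foldl_argmax_spec (R : realDomainType) (phi : nat -> R) (js : seq nat)
    (acc : R * nat) :
  acc.1 = phi acc.2 ->
  let r := foldl (fun acc j => if acc.1 <= phi j then (phi j, j) else acc) acc js in
  [/\ r.1 = phi r.2, r.2 = acc.2 \/ r.2 \in js, acc.1 <= r.1
    & {in js, forall j, phi j <= r.1}].
Proof.
elim: js acc => [|j js IH] acc acc_phi /=; first by split=> //; left.
set acc' := if acc.1 <= phi j then (phi j, j) else acc.
have acc'_phi : acc'.1 = phi acc'.2 by rewrite /acc'; case: ifP.
have [r_phi r_in acc'_le r_max] := IH acc' acc'_phi.
have acc_le : acc.1 <= acc'.1 by rewrite /acc'; case: ifP => // /negbT; rewrite -ltNge => /ltW.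
have phij_le : phi j <= acc'.1 by rewrite /acc'; case: ifP => // /negbT; rewrite -ltNge => /ltW.
split=> //.
- case: r_in => [->|]; last by rewrite inE orbC => ->; right.
  by rewrite /acc'; case: ifP => _; [right; rewrite inE eqxx | left].
- exact: le_trans acc'_le.
- move=> k; rewrite inE => /predU1P [->|/r_max //]; exact: le_trans phij_le _.
Qed.

Lemma sum_sqr_minimizer_eq (R : realFieldType) (m n : nat) (x y : nat -> R) :
  \sum_(m <= l < n) y l ^+ 2 <= \sum_(m <= l < n) x l ^+ 2 ->
  0 <= \sum_(m <= l < n) x l * (y l - x l) ->
  forall l, (m <= l < n)%N -> y l = x l.
Proof.
move=> y_le x_orth l /andP [ml ln].
have expand : \sum_(m <= k < n) y k ^+ 2 = \sum_(m <= k < n) x k ^+ 2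
    + 2 * \sum_(m <= k < n) x k * (y k - x k) + \sum_(m <= k < n) (y k - x k) ^+ 2.
  by rewrite mulr_sumr -!big_split /=; apply: eq_bigr => k _; ring.
have sqr_sum_ge0 i j : 0 <= \sum_(i <= k < j) (y k - x k) ^+ 2.
  by apply: sumr_ge0 => k _; exact: sqr_ge0.
have before := sqr_sum_ge0 m l; have after := sqr_sum_ge0 l.+1 n.
have split_at_l : \sum_(m <= k < n) (y k - x k) ^+ 2 =
    \sum_(m <= k < l) (y k - x k) ^+ 2 + (y l - x l) ^+ 2 + \sum_(l.+1 <= k < n) (y k - x k) ^+ 2.
  by rewrite (big_cat_nat _ (n := l)) ?(ltnW ln) //= (big_ltn ln) addrA.
have : (y l - x l) ^+ 2 <= 0 by lra.
by rewrite le_eqVlt ltNge sqr_ge0 orbF sqrf_eq0 subr_eq0 => /eqP.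
Qed.

Section Balancing.
Variables (R : realFieldType) (N : nat) (T d : R) (s : nat -> R).

Local Notation sext := (sext N T d s).
Local Notation slope := (slope N T d s).
Local Notation iub_run := (iub_run N T d s).
Local Notation iub_xbar := (iub_xbar N T d s).

Definition cum (k : nat) : R := sext k + k%:R * d.

Lemma cum0 : cum 0 = 0.
Proof. by rewrite /cum /Defs.sext eqxx mul0r addr0. Qed.

Lemma cum_last : cum N.+1 = T + N%:R * d.
Proof. by rewrite /cum /Defs.sext /= eqxx -addn1 natrD; ring. Qed.

Lemma cum_mid k : (1 <= k <= N)%N -> cum k = s k + k%:R * d.
Proof.
by move=> kN; rewrite /cum /Defs.sext !ifF //; apply/negbTE; lia.
Qed.

Lemma Pe_feasibleP (y : nat -> R) :
  Pe_feasible N T d s y <->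
  (forall k, (0 < k <= N.+1)%N -> cum k <= \sum_(1 <= l < k.+1) y l)
  /\ \sum_(1 <= l < N.+2) y l = cum N.+1.
Proof.
rewrite cum_last; split=> [[y_pre y_tot]|[y_pre y_tot]]; split=> // k kN.
- have [kN'|->] : (k <= N)%N \/ k = N.+1 by lia.
  + by rewrite cum_mid; [apply: y_pre |]; lia.
  + by rewrite y_tot cum_last.
- by rewrite -cum_mid; [apply: y_pre |]; lia.
Qed.

Lemma cumB_slope i k : (i < k)%N -> cum k - cum i = (k - i)%:R * (slope i k + d).
Proof.
move=> ik; have ki_gt0 : (0 : R) < (k - i)%:R by rewrite ltr0n subn_gt0.
rewrite /cum /Defs.slope mulrDr [(k - i)%:R * _]mulrC divfK ?gt_eqF // natrB ?(ltnW ik) //; ring.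
Qed.

Lemma slope_le i k K :
  (i < k)%N -> (slope i k <= K) = (cum k - cum i <= (k - i)%:R * (K + d)).
Proof. by move=> ik; rewrite cumB_slope // ler_pM2l ?ltr0n ?subn_gt0 // lerD2r. Qed.

Lemma slope_le_of_max i i' j : (i < i')%N -> (i' < j)%N ->
  slope i j <= slope i i' -> slope i' j <= slope i i'.
Proof.
move=> ii' i'j; have ij := ltn_trans ii' i'j.
rewrite (slope_le _ ij) (slope_le _ i'j); have := cumB_slope ii'.
rewrite !(natrB _ (ltnW ii'), natrB _ (ltnW i'j), natrB _ (ltnW ij)) => cum_i' cum_j; lra.
Qed.

Lemma best_stepP i : (i <= N)%N ->
  let: (M, i') := best_step N T d s i in
  [/\ (i < i' <= N.+1)%N, M = slope i i'
    & forall j, (i < j <= N.+1)%N -> slope i j <= M].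
Proof.
move=> iN; have := @foldl_argmax_spec R (slope i) (iota i.+2 (N - i)) (slope i i.+1, i.+1) erefl.
rewrite /best_step; case: foldl => M i' /= [-> i'_range first_le later_le].
split=> //; first by case: i'_range => [->|]; [lia | rewrite mem_iota; lia].
move=> j ijN; have [-> //|j_ne] := eqVneq j i.+1.
by apply: later_le; rewrite mem_iota; lia.
Qed.

Lemma iub_run_ind (P : nat -> (nat -> R) -> Prop) :
  P N.+1 (fun _ => 0) ->
  (forall i i' M (g : nat -> R), (i < i' <= N.+1)%N -> M = slope i i' ->
     (forall j, (i < j <= N.+1)%N -> slope i j <= M) -> P i' g ->
     P i (fun m => if (i < m <= i')%N then M + d else g m)) ->
  forall fuel i, (i <= N.+1)%N -> (N.+1 <= i + fuel)%N -> P i (iub_run fuel i).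
Proof.
move=> P_end P_step; elim=> [|fuel IH] i iN fuel_i /=.
  by have -> : i = N.+1 by lia.
case: (ltnP i N.+1) => [iN'|Ni]; last by have -> : i = N.+1 by lia.
have := best_stepP iN'; case: best_step => M i' [ii' M_def M_max].
by apply: P_step => //; apply: IH; lia.
Qed.

Lemma sum_glue (Phi : nat -> R -> R) (g : nat -> R) i i' k v : (i <= i' <= k)%N ->
  \sum_(i.+1 <= l < k.+1) Phi l (if (i < l <= i')%N then v else g l)
  = \sum_(i.+1 <= l < i'.+1) Phi l v + \sum_(i'.+1 <= l < k.+1) Phi l (g l).
Proof.
move=> ii'k; rewrite (big_cat_nat _ (n := i'.+1)) /=; [congr (_ + _) | lia | lia].
- by apply: eq_big_nat => l l_range; rewrite ifT //; lia.
- by apply: eq_big_nat => l l_range; rewrite ifF //; apply/negbTE; lia.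
Qed.

Lemma sum_const_block i k (v : R) : \sum_(i.+1 <= l < k.+1) v = (k - i)%:R * v.
Proof. by rewrite sumr_const_nat subSS mulr_natl. Qed.

Lemma iub_run_sum fuel i : (i <= N.+1)%N -> (N.+1 <= i + fuel)%N ->
  \sum_(i.+1 <= l < N.+2) iub_run fuel i l = cum N.+1 - cum i.
Proof.
move: fuel i; apply: (@iub_run_ind (fun i f => \sum_(i.+1 <= l < N.+2) f l = cum N.+1 - cum i)).
  by rewrite big_geq // subrr.
move=> i i' M g ii'N M_def _ IH.
rewrite (sum_glue (fun _ x => x)) /=; last lia.
rewrite IH sum_const_block M_def -cumB_slope; [ring | lia].
Qed.

Lemma iub_run_prefix_ge fuel i : (i <= N.+1)%N -> (N.+1 <= i + fuel)%N ->
  forall k, (i < k <= N.+1)%N -> cum k - cum i <= \sum_(i.+1 <= l < k.+1) iub_run fuel i l.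
Proof.
move: fuel i; apply: (@iub_run_ind (fun i f => forall k, (i < k <= N.+1)%N ->
  cum k - cum i <= \sum_(i.+1 <= l < k.+1) f l)); first by lia.
move=> i i' M g ii'N M_def M_max IH k ikN.
have [ki'|i'k] := leqP k i'.
  rewrite (eq_big_nat _ _ (F2 := fun _ => M + d)); last by move=> l l_range; rewrite ifT //; lia.
  by rewrite sum_const_block -slope_le ?M_max //; lia.
rewrite (sum_glue (fun _ x => x)) /=; last lia.
rewrite sum_const_block M_def -cumB_slope; last lia.
have /IH rest_ge : (i' < k <= N.+1)%N by lia.
lra.
Qed.

(* [c] is the slack by which the prefix sum of [y] up to [i] exceeds B_i;
   carrying it along makes the first-order condition inductive over blocks. *)
Definition variational_from i (f : nat -> R) : Prop :=
  forall K, (forall j, (i < j <= N.+1)%N -> slope i j <= K) ->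
  forall (y : nat -> R) c, 0 <= c ->
  (forall k, (i < k <= N.+1)%N -> cum k - cum i <= c + \sum_(i.+1 <= l < k.+1) y l) ->
  c + \sum_(i.+1 <= l < N.+2) y l = cum N.+1 - cum i ->
  - (K + d) * c <= \sum_(i.+1 <= l < N.+2) f l * (y l - f l).

Lemma iub_run_variational fuel i : (i <= N.+1)%N -> (N.+1 <= i + fuel)%N ->
  variational_from i (iub_run fuel i).
Proof.
move: fuel i; apply: iub_run_ind.
  by move=> K _ y c _ _; rewrite !big_geq // addr0 subrr => ->; rewrite mulr0.
move=> i i' M g ii'N M_def M_max IH K K_max y c c_ge0 y_pre y_tot.
have M_le_K : M <= K by rewrite M_def; apply: K_max; lia.
have block : cum i' - cum i = (i' - i)%:R * (M + d) by rewrite M_def cumB_slope //; lia.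
set Y := \sum_(i.+1 <= l < i'.+1) y l.
have split_y k : (i' <= k)%N -> \sum_(i.+1 <= l < k.+1) y l = Y + \sum_(i'.+1 <= l < k.+1) y l.
  by move=> i'k; rewrite (big_cat_nat _ (n := i'.+1)) //; lia.
set c' := c + Y - (cum i' - cum i).
have c'_ge0 : 0 <= c'.
  have /y_pre y_i' : (i < i' <= N.+1)%N by lia.
  by rewrite -/Y in y_i'; rewrite /c'; lra.
have rest_ge : - (M + d) * c' <= \sum_(i'.+1 <= l < N.+2) g l * (y l - g l).
  apply: IH => //.
  - move=> j i'jN; rewrite M_def; apply: slope_le_of_max; try lia.
    by rewrite -M_def; apply: M_max; lia.
  - move=> k i'kN; have /y_pre : (i < k <= N.+1)%N by lia.
    by rewrite split_y /c'; [move=> ?; lra | lia].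
  - by move: y_tot; rewrite split_y /c'; [lra | lia].
rewrite (sum_glue (fun l x => x * (y l - x))) /=; last lia.
rewrite -mulr_sumr sumrB sum_const_block -block -/Y.
have : 0 <= (K - M) * c by rewrite mulr_ge0 // subr_ge0.
rewrite /c' in rest_ge; lra.
Qed.

Lemma iub_xbar_feasible : Pe_feasible N T d s iub_xbar.
Proof.
apply/Pe_feasibleP; split=> [k kN|].
  by have := @iub_run_prefix_ge N.+1 0 (leq0n _) (leqnn _) k kN; rewrite cum0 subr0.
by rewrite (@iub_run_sum N.+1 0 (leq0n _) (leqnn _)) cum0 subr0.
Qed.

Lemma iub_xbar_variational (y : nat -> R) : Pe_feasible N T d s y ->
  0 <= \sum_(1 <= l < N.+2) iub_xbar l * (y l - iub_xbar l).
Proof.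
case/Pe_feasibleP => y_pre y_tot.
have := best_stepP (leq0n N); case: best_step => M i' [_ _ M_max].
have := @iub_run_variational N.+1 0 (leq0n _) (leqnn _) M M_max y 0 (lexx 0).
rewrite mulr0 cum0; apply=> [k kN|]; first by rewrite subr0 add0r y_pre.
by rewrite subr0 add0r y_tot.
Qed.

End Balancing.

Theorem lemma5 (R : realFieldType) (N : nat) (d T : R) (s : nat -> R)
  (xe : nat -> R) :
  (1 <= N)%N -> 0 < d -> N.+1%:R * d <= T ->
  0 <= s 1%N -> (forall k, (1 <= k < N)%N -> s k <= s k.+1) ->
  Pe_optimal N T d s xe ->
  forall i, (1 <= i <= N)%N -> xe i = iub_xbar N T d s i.
Proof.
move=> _ _ _ _ _ [xe_feasible xe_min] i iN.
apply: (sum_sqr_minimizer_eq (xe_min _ (iub_xbar_feasible _ _ _ _))).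
- exact: iub_xbar_variational.
- lia.
Qed.
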